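(* In the setting below, if a PHB $\mathbf{E}$ is $\Delta^-$-stable but $\Delta^+$-unstable, then it can be expressed uniquely as a nonsplit extension of PHBs $0\to\mathbf{L}^+\to\mathbf{E}\to\mathbf{L}^-\to0$, where $\mathbf{L}^\pm$ are parabolic Higgs line bundles with discrete data $S$ and $S^c$ respectively. Conversely, any such extension is $\Delta^-$-stable but $\Delta^+$-unstable.
   Context: Fix distinct $x_1,\dots,x_n\in\mathbb{C}\mathbb{P}^1$. Weights $\beta=(\beta_1(x_i),\beta_2(x_i))_i$ with $0\le\beta_1(x_i)<\beta_2(x_i)<1$ form the weight space $Q$; $\varepsilon_T(\alpha)=\sum_{i\in T}\alpha_i-\sum_{i\notin T}\alpha_i$ for $\alpha=\beta_2-\beta_1$. Walls: intersections of $Q$ with hyperplanes $\varepsilon_T(\beta_2-\beta_1)=0$; chambers: components of the complement. Throughout, PHBs are rank-2 parabolic Higgs bundles $(E,\Phi)$ over $\mathbb{C}\mathbb{P}^1$ which are trivial as holomorphic bundles, with fixed determinant and trace-free Higgs field ($E$ has a line $E_{x_i,2}\subset E_{x_i}$ at each $x_i$ with weights $\beta_1(x_i)<\beta_2(x_i)$; $\Phi$ a meromorphic $\mathrm{End}_0(E)\otimes K_{\mathbb{C}\mathbb{P}^1}$-valued section with at most simple poles at the $x_i$, residues mapping $E_{x_i}$ into $E_{x_i,2}$ and killing $E_{x_i,2}$), and parabolic Higgs line bundles are holomorphically trivial. A parabolic Higgs line bundle has at each $x_i$ weight $\beta_1(x_i)$ or $\beta_2(x_i)$; its discrete data is the set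 of $i$ with weight $\beta_2(x_i)$ (for a subbundle $L\subset E$, $\{i:L_{x_i}=E_{x_i,2}\}$; quotients get complementary weights). $(E,\Phi)$ is $\beta$-stable iff every $\Phi$-invariant line subbundle $L$ with discrete data $S_L$ has $\varepsilon_{S_L}(\beta_2-\beta_1)<0$. Fix a point of $Q$ on exactly one wall $W$, with adjacent chambers $\Delta^\pm$, and let $S$ be the index set of $W$ normalized so that $\varepsilon_S(\beta_2-\beta_1)>0$ on $\Delta^+$; $\Delta^\pm$-stable means stable for weights in $\Delta^\pm$. *)

From HB Require Import structures.
From mathcomp Require Import all_boot all_order all_algebra.
From mathcomp Require Import all_classical all_reals all_analysis.
From mathcomp Require Import complex.
Import numFieldTopology.Exports.

Set Implicit Arguments.
Unset Strict Implicit.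
Unset Printing Implicit Defensive.

Import Order.TTheory GRing.Theory Num.Theory.
Local Open Scope ring_scope.
Local Open Scope classical_set_scope.

Notation weight R n := ('rV[R]_n * 'rV[R]_n)%type.

Section PHB.
Variables (R : realType) (n : nat).
Local Notation C := (complex R).

(* A weight vector beta = (beta_1, beta_2), each a row vector indexed by the
   marked points x_0, ..., x_{n-1}. *)
Local Notation weight := (weight R n).

Definition eps (T : {set 'I_n}) (a : 'rV[R]_n) : R :=
  \sum_(i in T) a ord0 i - \sum_(i in ~: T) a ord0 i.

Definition alpha (b : weight) : 'rV[R]_n := b.2 - b.1.

Definition Qspace : set weight :=
  [set b : weight | forall i : 'I_n, 0 <= b.1 ord0 i /\ b.1 ord0 i < b.2 ord0 i /\ b.2 ord0 i < 1].

Definition wall (T : {set 'I_n}) : set weight :=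
  Qspace `&` [set b : weight | eps T (alpha b) = 0].

Definition Qreg : set weight :=
  Qspace `&` [set b : weight | forall T : {set 'I_n}, ~ wall T b].

Definition chamber (D : set weight) : Prop :=
  exists2 p, Qreg p & D = connected_component Qreg p.

(* Row vectors in C^2; endomorphisms act on the right: v |-> v *m A.
   The flag line E_{x_i,2} is spanned by flag i; res i is the residue of Phi
   at x_i.  Phi = sum_i res i dz/(z - x i). *)
Record PHB (x : 'I_n -> C) := MkPHB {
  flag : 'I_n -> 'rV[C]_2;
  res : 'I_n -> 'M[C]_2;
  flag_nz : forall i, flag i != 0;
  res_img : forall i, (res i <= flag i)%MS;
  res_ker : forall i, flag i *m res i = 0;
  res_tr  : forall i, \tr (res i) = 0;
  res_sum : \sum_i res i = 0                  (* holomorphic at infinity (as a K-valued section) *)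
}.

Variable x : 'I_n -> C.

Definition Higgs (E : PHB x) (z : C) : 'M[C]_2 :=
  \sum_i (z - x i)^-1 *: res E i.

Definition invariant (E : PHB x) (v : 'rV[C]_2) : Prop :=
  forall z : C, (forall i, z != x i) -> (v *m Higgs E z <= v)%MS.

Definition sub_data (E : PHB x) (v : 'rV[C]_2) : {set 'I_n} :=
  [set i | (v == flag E i)%MS].
Definition quot_data (E : PHB x) (v : 'rV[C]_2) : {set 'I_n} :=
  [set i | ~~ (v == flag E i)%MS].

Definition stable (b : weight) (E : PHB x) : Prop :=
  forall v : 'rV[C]_2, v != 0 -> invariant E v -> eps (sub_data E v) (alpha b) < 0.

(* A splitting of 0 -> L -> E -> E/L -> 0 (L spanned by v) as PHBs: a
   (constant) section w of E mapping to a generator of E/L, which is a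
   parabolic morphism (w in E_{x_i,2} wherever E/L has weight beta_2(x_i))
   and commutes with the Higgs fields (w spans a Phi-invariant line). *)
Definition splitting (E : PHB x) (v w : 'rV[C]_2) : Prop :=
  [/\ ~~ (w <= v)%MS,
      (forall i, i \in quot_data E v -> (w <= flag E i)%MS)
    & invariant E w].

(* E is a nonsplit extension 0 -> L^+ -> E -> L^- -> 0 with L^+ = <v> having
   discrete data S and L^- = E/<v> having discrete data S^c. *)
Definition nonsplit_ext (E : PHB x) (S : {set 'I_n}) (v : 'rV[C]_2) : Prop :=
  [/\ v != 0, invariant E v, sub_data E v = S, quot_data E v = ~: S
    & forall w, ~ splitting E v w].

End PHB.

(* Crossing the wall changes the sign of eps_T(alpha) only for T = S (or its
   complement): T = S, ~: S are the only sets whose wall passes through b0, and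
   a chamber adjacent to b0 lies on the side of every other wall prescribed by
   the sign at b0.  Hence a Delta^+-destabilizing Phi-invariant line of a
   Delta^- -stable E has data exactly S, which makes it the line L^+ of an
   extension with quotient data S^c; a splitting would be an invariant line of
   data S^c, destabilizing on Delta^-.  Conversely, an invariant line of such
   an extension other than L^+ has data disjoint from S and missing some index
   outside S, so eps is negative already at b0, hence on Delta^-. *)
From Pilot Require Import Defs.
From HB Require Import structures.
From mathcomp Require Import all_boot all_order all_algebra.
From mathcomp Require Import all_classical all_reals all_analysis.
From mathcomp Require Import complex ring lra.
Import numFieldTopology.Exports.

Set Implicit Arguments.
Unset Strict Implicit.
Unset Printing Implicit Defensive.

Import Order.TTheory GRing.Theory Num.Theory.
Local Open Scope ring_scope.

Definition sgn_in {R : realType} {n} (T : {set 'I_n}) (k : 'I_n) : R :=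
  if k \in T then 1 else -1.

Section Eps.
Variables (R : realType) (n : nat).
Implicit Types (T U : {set 'I_n}) (a c : 'rV[R]_n) (b : weight R n).

Lemma epsE T a : eps T a = \sum_k sgn_in T k * a ord0 k.
Proof.
rewrite /eps (big_mkcond (fun i => i \in T)) (big_mkcond (fun i => i \in ~: T)) /=.
rewrite -sumrB; apply: eq_bigr => k _; rewrite /sgn_in !inE.
by case: (k \in T); rewrite /= ?mul1r ?mulN1r ?subr0 ?sub0r.
Qed.

Lemma epsD T a c : eps T (a + c) = eps T a + eps T c.
Proof. by rewrite !epsE -big_split; apply: eq_bigr => k _; rewrite mxE mulrDr. Qed.

Lemma epsC T a : eps (~: T) a = - eps T a.
Proof. by rewrite /eps finset.setCK opprB. Qed.

Lemma eps_set0_le0 a : (forall k, 0 <= a ord0 k) -> eps finset.set0 a <= 0.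
Proof.
by move=> a_ge0; rewrite epsE; apply: sumr_le0 => k _; rewrite /sgn_in inE mulN1r oppr_le0.
Qed.

Lemma eps_disjoint_lt0 T U a (i : 'I_n) :
  (forall k, 0 < a ord0 k) -> [disjoint T & U] -> i \notin T -> i \notin U ->
  eps T a + eps U a < 0.
Proof.
move=> a_gt0 TU iT iU; rewrite !epsE -big_split (bigD1 i) //= /sgn_in (negbTE iT) (negbTE iU).
have rest_le0 : \sum_(k | k != i) (sgn_in T k * a ord0 k + sgn_in U k * a ord0 k) <= 0.
  apply: sumr_le0 => k _; have := a_gt0 k; rewrite /sgn_in.
  case: (boolP (k \in T)) => kT; last by case: (k \in U); lra.
  by rewrite (disjointFr TU kT); lra.
by move: rest_le0 (a_gt0 i); rewrite /sgn_in; lra.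
Qed.

Lemma continuous_eps T : continuous (fun b => eps T (alpha b)).
Proof.
have -> : (fun b => eps T (alpha b)) =
          (fun b => \sum_k sgn_in T k * (b.2 ord0 k - b.1 ord0 k)).
  by apply: funext => b; rewrite epsE; apply: eq_bigr => k _; rewrite !mxE.
move=> b; apply: cvg_big => [|k _]; first exact: add_continuous.
apply: cvgM; first exact: cvg_cst.
apply: cvgB.
  apply: (@continuous_comp _ _ _ snd (fun M : 'rV[R]_n => M ord0 k)).
    exact: cvg_snd.
  exact: coord_continuous.
apply: (@continuous_comp _ _ _ fst (fun M : 'rV[R]_n => M ord0 k)).
  exact: cvg_fst.
exact: coord_continuous.
Qed.

End Eps.

Lemma component_lt0 (R : realType) (X : topologicalType) (A : set X) (f : X -> R) p c :
  continuous f -> (forall y, A y -> f y != 0) ->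
  closure (connected_component A p) c -> f c < 0 ->
  forall y, connected_component A p y -> f y < 0.
Proof.
move=> f_cont f_neq0 clc fc_lt0 y Cy.
have [z [Cz fz_lt0]] : exists z, connected_component A p z /\ f z < 0.
  by case: (clc _ (cvgr_lt _ (f_cont c) 0 fc_lt0)) => z; exists z.
have : connected [set f y | y in connected_component A p]%classic.
  apply: connected_continuous_connected; first exact: component_connected.
  exact: continuous_subspaceT.
move/connected_intervalP => fC_interval; rewrite ltNge; apply/negP => fy_ge0.
have [w Cw fw0] : [set f y | y in connected_component A p]%classic 0.
  apply: (fC_interval (f z) (f y)); [by exists z | by exists y | ].
  by rewrite fy_ge0 (ltW fz_lt0).
by move: (f_neq0 w (connected_component_sub Cw)); rewrite fw0 eqxx.
Qed.

Section Chambers.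
Variables (R : realType) (n : nat).
Implicit Types (T : {set 'I_n}) (b c : weight R n) (D : set (weight R n)).

Lemma Qreg_eps_neq0 T b : Qreg b -> eps T (alpha b) != 0.
Proof. by case=> Qb not_wall; apply/eqP => eT; apply: (not_wall T). Qed.

Lemma chamber_eps_lt0 T D c : chamber D -> closure D c ->
  eps T (alpha c) < 0 -> forall b, D b -> eps T (alpha b) < 0.
Proof.
case=> p _ -> clc; apply: component_lt0 clc; first exact: continuous_eps.
by move=> b; apply: Qreg_eps_neq0.
Qed.

Lemma chamber_eps_gt0 T D c : chamber D -> closure D c ->
  0 < eps T (alpha c) -> forall b, D b -> 0 < eps T (alpha b).
Proof.
move=> cD clc; rewrite -oppr_lt0 -epsC => /(chamber_eps_lt0 cD clc) lt0 b /lt0.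
by rewrite epsC oppr_lt0.
Qed.

Lemma chamber_Qspace D b : chamber D -> D b -> Qspace b.
Proof. by case=> p _ -> /connected_component_sub []. Qed.

Lemma chamber_nonempty D : chamber D -> exists b, D b.
Proof. by case=> p Qp ->; exists p; exact: connected_component_refl. Qed.

Lemma alpha_gt0 b k : Qspace b -> 0 < alpha b ord0 k.
Proof. by move=> Qb; rewrite !mxE subr_gt0; case: (Qb k) => _ []. Qed.

Lemma Qspace_shift b : Qspace b -> exists2 e, 0 < e &
  forall d : 'rV[R]_n, (forall k, `|d ord0 k| <= e) -> Qspace (b.1, b.2 + d).
Proof.
move=> Qb; pose m := \big[Num.min/1]_k Num.min (alpha b ord0 k) (1 - b.2 ord0 k).
have m_gt0 : 0 < m.
  apply: lt_bigmin => // k _; rewrite lt_min alpha_gt0 // subr_gt0.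
  by case: (Qb k) => _ [].
exists (m / 2) => [|d d_small k]; first by rewrite divr_gt0.
have := bigmin_le 1 k (fun k => Num.min (alpha b ord0 k) (1 - b.2 ord0 k)).
rewrite -/m le_min !mxE => /andP[m_le_alpha m_le_gap].
have := d_small k; case: (Qb k) => b1_ge0 [b12 b2_lt1].
by rewrite ler_norml /= => /andP[d_ge d_le]; split=> //; lra.
Qed.

End Chambers.

Section Walls.
Variables (R : realType) (n : nat).
Implicit Types (S T : {set 'I_n}) (b : weight R n).

Lemma eps_pair S e (i j : 'I_n) (c : R) : i != j ->
  eps S (\row_k (e * ((k == i)%:R + c * (k == j)%:R))) =
  e * (sgn_in S i + c * sgn_in S j).
Proof.
move=> ij; rewrite epsE (bigD1 i) //= (bigD1 j) 1?eq_sym //= big1 => [|k /andP[ki kj]].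
  by rewrite !mxE eqxx (negbTE ij) eq_sym (negbTE ij) eqxx /=; ring.
by rewrite !mxE (negbTE ki) (negbTE kj) mulr0 addr0 !mulr0.
Qed.

(* Moving b0 along the wall of S in the two coordinate directions i and j
   stays on the wall of T only if i and j are separated by T as they are by S. *)
Lemma wall_same_side S T b0 (i j : 'I_n) :
  wall S b0 -> wall T b0 -> @wall R n T = @wall R n S -> i != j ->
  ((i \in T) == (j \in T)) = ((i \in S) == (j \in S)).
Proof.
move=> [Qb0 eS] [_ eT] eq_wall ij.
have [e e_gt0 Q_shift] := Qspace_shift Qb0.
pose c : R := - (sgn_in S i * sgn_in S j).
pose d := \row_k (e * ((k == i)%:R + c * (k == j)%:R)) : 'rV[R]_n.
have c_norm : `|c| = 1.
  by rewrite /c /sgn_in normrN normrM; case: (i \in S); case: (j \in S); rewrite ?normrN normr1 mulr1.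
have Qb' : Qspace (b0.1, b0.2 + d).
  apply: Q_shift => k; rewrite mxE normrM gtr0_norm // ger_pMr //.
  case: (eqVneq k i) => [->|_]; first by rewrite (negbTE ij) mulr0 addr0 normr1.
  by rewrite add0r normrM c_norm mul1r; case: (k == j); rewrite ?normr1 ?normr0.
have eps_shift U : eps U (alpha (b0.1, b0.2 + d)) = eps U (alpha b0) + eps U d.
  by rewrite -epsD /alpha /= addrAC.
have : wall T (b0.1, b0.2 + d).
  rewrite eq_wall; split=> //; rewrite /= eps_shift eS add0r eps_pair // /c /sgn_in.
  by case: (i \in S); case: (j \in S); lra.
case=> _ /=; rewrite eps_shift eT add0r eps_pair // /c /sgn_in.
by case: (i \in S); case: (j \in S); case: (i \in T); case: (j \in T) => //= ; lra.
Qed.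

Lemma wall_eq_set S T b0 :
  wall S b0 -> wall T b0 -> @wall R n T = @wall R n S -> T = S \/ T = ~: S.
Proof.
move=> wS wT eq_wall; have same := fun i j => wall_same_side wS wT eq_wall (i:=i) (j:=j).
case: (pselect (exists i0, (i0 \in T) = (i0 \in S))) => [[i0 i0TS] | no_agree].
  left; apply/setP => j; case: (eqVneq i0 j) => [<- // | i0j].
  by move: (same _ _ i0j); rewrite i0TS; case: (i0 \in S); case: (j \in T); case: (j \in S).
right; apply/setP => j; rewrite !inE.
by case: (j \in T) (j \in S) (fun e => no_agree (ex_intro _ j e)) => [] [] // agree; case: agree.
Qed.

End Walls.

Lemma sub_rV_eqmx (F : fieldType) m (u w : 'rV[F]_m) :
  u != 0 -> w != 0 -> (u <= w)%MS -> (u == w)%MS.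
Proof.
move=> u0 w0 uw; apply/andP; split => //.
by rewrite -(mxrank_leqif_sup uw).2 !rank_rV u0 w0.
Qed.

Section Subbundles.
Variables (R : realType) (n : nat) (x : 'I_n -> complex R) (E : PHB x).
Implicit Types (u v w : 'rV[complex R]_2) (b : weight R n).

Lemma quot_dataE v : quot_data E v = ~: sub_data E v.
Proof. by apply/setP => i; rewrite !inE. Qed.

Lemma sub_data_eqmx u v : (u == v)%MS -> sub_data E u = sub_data E v.
Proof.
move=> /eqmxP uv; apply/setP => i; rewrite !inE.
by apply/eqmxP/eqmxP => [uf | vf]; [apply: eqmx_trans (eqmx_sym uv) uf | apply: eqmx_trans uv vf].
Qed.

Lemma eqmx_sub_data u v i : i \in sub_data E u -> i \in sub_data E v -> (u == v)%MS.
Proof. by rewrite !inE => /eqmxP uf /eqmxP vf; apply/eqmxP; apply: eqmx_trans uf (eqmx_sym vf). Qed.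

Lemma splitting_neq0 v w : splitting E v w -> w != 0.
Proof. by case=> wv _ _; apply: contraNneq wv => ->; rewrite sub0mx. Qed.

Lemma splitting_sub_data v w : splitting E v w -> sub_data E w = quot_data E v.
Proof.
move=> split_w; have w0 := splitting_neq0 split_w; case: split_w => wv w_flag _.
apply/setP => i; rewrite [in RHS]inE; apply/idP/idP => [iw | iq].
  apply: contra wv => vf; have /andP[] // : (w == v)%MS.
  by apply: (eqmx_sub_data iw); rewrite inE.
by rewrite inE sub_rV_eqmx ?flag_nz ?w_flag ?inE.
Qed.

Lemma not_splitting_flag v u : Defs.invariant E u -> ~~ (u <= v)%MS -> ~ splitting E v u ->
  exists2 i, i \in quot_data E v & ~~ (u <= flag E i)%MS.
Proof.
move=> inv_u uv not_split; apply: contrapT => no_i; apply: not_split; split => // i iq.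
by apply: contrapT => /negP ui; apply: no_i; exists i.
Qed.

Lemma nonsplit_ext_eqmx (S : {set 'I_n}) s v w : s \in S ->
  nonsplit_ext E S v -> nonsplit_ext E S w -> (w == v)%MS.
Proof.
move=> sS [_ _ dv _ _] [_ _ dw _ _].
by apply: (eqmx_sub_data (i := s)); rewrite ?dv ?dw.
Qed.

Lemma not_stable b : ~ stable b E ->
  exists v, [/\ v != 0, Defs.invariant E v & 0 <= eps (sub_data E v) (alpha b)].
Proof.
move=> unstable; apply: contrapT => no_v; apply: unstable => v v0 inv_v.
by rewrite ltNge; apply/negP => ge0; apply: no_v; exists v.
Qed.

End Subbundles.

Section WallCrossing.
Variables (R : realType) (n : nat) (x : 'I_n -> complex R).
Variables (b0 : weight R n) (S : {set 'I_n}) (Dp Dm : set (weight R n)).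
Hypothesis wall_b0 : wall S b0.
Hypothesis only_wall : forall T, wall T b0 -> @wall R n T = @wall R n S.
Hypotheses (chamber_Dp : chamber Dp) (chamber_Dm : chamber Dm).
Hypotheses (Dp_b0 : closure Dp b0) (Dm_b0 : closure Dm b0).
Hypothesis Dp_gt0 : forall b, Dp b -> 0 < eps S (alpha b).
Hypothesis Dm_lt0 : forall b, Dm b -> eps S (alpha b) < 0.
Implicit Types (T : {set 'I_n}) (b : weight R n) (E : PHB x) (u v : 'rV[complex R]_2).

Lemma eps_wall_neq0 T : T != S -> T != ~: S -> eps T (alpha b0) != 0.
Proof.
move=> TS TSc; apply/eqP => eT0; have wall_T : wall T b0 by case: wall_b0.
by case: (wall_eq_set wall_b0 wall_T (only_wall wall_T)) => eqT; rewrite eqT eqxx in TS TSc.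
Qed.

Lemma sign_change_wall T p q : Dp p -> Dm q ->
  0 <= eps T (alpha p) -> eps T (alpha q) < 0 -> T = S.
Proof.
move=> Dp_p Dm_q p_ge0 q_lt0; have [-> // | TS] := eqVneq T S.
have [TSc | TSc] := eqVneq T (~: S).
  by move: p_ge0; rewrite TSc epsC oppr_ge0 leNgt Dp_gt0.
case: (ltgtP (eps T (alpha b0)) 0) => [lt0 | gt0 | eq0].
- by move: p_ge0; rewrite leNgt (chamber_eps_lt0 chamber_Dp Dp_b0 lt0).
- by move: q_lt0; rewrite ltNge ltW // (chamber_eps_gt0 chamber_Dm Dm_b0 gt0).
- by move: (eps_wall_neq0 TS TSc); rewrite eq0 eqxx.
Qed.

Lemma wall_set_nonempty : exists s, s \in S.
Proof.
have [p Dp_p] := chamber_nonempty chamber_Dp.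
case: (set_0Vmem S) => [S0 | [s sS]]; last by exists s.
move: (Dp_gt0 Dp_p); rewrite S0 ltNge eps_set0_le0 // => k.
exact/ltW/alpha_gt0/(chamber_Qspace chamber_Dp Dp_p).
Qed.

Lemma nonsplit_ext_of_destabilizing E v :
  (forall b, Dm b -> stable b E) ->
  v != 0 -> Defs.invariant E v -> sub_data E v = S -> nonsplit_ext E S v.
Proof.
move=> stable_Dm v0 inv_v dv; split => //; first by rewrite quot_dataE dv.
move=> w split_w; have [q Dm_q] := chamber_nonempty chamber_Dm.
have [_ _ inv_w] := split_w; have := stable_Dm q Dm_q w (splitting_neq0 split_w) inv_w.
by rewrite (splitting_sub_data split_w) quot_dataE dv epsC oppr_lt0 ltNge ltW ?Dm_lt0.
Qed.

Lemma nonsplit_ext_stable E v b : nonsplit_ext E S v -> Dm b -> stable b E.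
Proof.
move=> [v0 inv_v dv qv not_split] Dm_b u u0 inv_u.
have [uv | not_uv] := boolP (u <= v)%MS.
  by rewrite (sub_data_eqmx E (sub_rV_eqmx u0 v0 uv)) dv Dm_lt0.
have [i iq not_ui] := not_splitting_flag inv_u not_uv (not_split u).
apply: (chamber_eps_lt0 chamber_Dm Dm_b0 _ Dm_b).
have [Q_b0 eS0] : Qspace b0 /\ eps S (alpha b0) = 0 by case: wall_b0.
suff : eps (sub_data E u) (alpha b0) + eps S (alpha b0) < 0 by rewrite eS0 addr0.
apply: (eps_disjoint_lt0 (i := i)).
- by move=> k; apply: alpha_gt0.
- apply/pred0P => k /=; apply/andP => -[ku kS].
  have /andP[uv _] : (u == v)%MS by apply: (eqmx_sub_data ku); rewrite dv.
  by rewrite uv in not_uv.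
- by rewrite inE; apply: contra not_ui => /andP[].
- by move: iq; rewrite qv inE.
Qed.

Lemma nonsplit_ext_unstable E v b : nonsplit_ext E S v -> Dp b -> ~ stable b E.
Proof.
move=> [v0 inv_v dv _ _] Dp_b stable_b.
by move: (stable_b v v0 inv_v); rewrite dv ltNge ltW ?Dp_gt0.
Qed.

End WallCrossing.

Theorem mainTheorem8 (R : realType) (n : nat) (x : 'I_n -> complex R)
    (x_inj : injective x)
    (b0 : weight R n) (S : {set 'I_n}) (Dp Dm : set (weight R n)) :
    wall S b0 ->
    (forall T : {set 'I_n}, wall T b0 -> @wall R n T = @wall R n S) ->
    chamber Dp -> chamber Dm ->
    closure Dp b0 -> closure Dm b0 ->
    (forall b, Dp b -> 0 < eps S (alpha b)) ->
    (forall b, Dm b -> eps S (alpha b) < 0) ->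
    (forall E : PHB x,
        (forall b, Dm b -> stable b E) -> (forall b, Dp b -> ~ stable b E) ->
        exists v, nonsplit_ext E S v /\
          forall w, nonsplit_ext E S w -> (w == v)%MS) /\
    (forall (E : PHB x) (v : 'rV[complex R]_2), nonsplit_ext E S v ->
        (forall b, Dm b -> stable b E) /\ (forall b, Dp b -> ~ stable b E)).
Proof.
move=> wall_b0 only_wall cDp cDm Dp_b0 Dm_b0 Dp_gt0 Dm_lt0.
split=> [E stable_Dm unstable_Dp | E v ext_v].
  have [p Dp_p] := chamber_nonempty cDp; have [q Dm_q] := chamber_nonempty cDm.
  have [v [v0 inv_v p_ge0]] := not_stable (unstable_Dp p Dp_p).
  have dv : sub_data E v = S.
    apply: (sign_change_wall wall_b0 only_wall cDp cDm Dp_b0 Dm_b0 Dp_gt0 Dp_p Dm_q p_ge0).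
    exact: stable_Dm.
  have ext_v := nonsplit_ext_of_destabilizing cDm Dm_lt0 stable_Dm v0 inv_v dv.
  have [s sS] := wall_set_nonempty cDp Dp_gt0.
  by exists v; split=> // w ext_w; apply: nonsplit_ext_eqmx sS ext_v ext_w.
split=> b; first exact: (nonsplit_ext_stable wall_b0 cDm Dm_b0 Dm_lt0 ext_v).
exact: (nonsplit_ext_unstable Dp_gt0 ext_v).
Qed.
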